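(* Let $\mathcal T\in\{\mathcal T_{CDV},\mathcal T_{BCD}\}$. If $B\vdash^{\mathcal T}_{=_{\beta\eta}}\Delta_1:\sigma$ and $\Delta_1\to_\eta\Delta_2$, then $B\vdash^{\mathcal T}_{=_{\beta\eta}}\Delta_2:\sigma$.
   Context: Type atoms: a set $\mathbb{A}$ of symbols; $\omega$ denotes a distinguished atom (the universal type). $\mathbb{A}_\infty=\{\mathtt a_i\mid i\in\mathbb N\}$ with each $\mathtt a_i\neq\omega$, and $\mathbb{A}^\omega_\infty=\mathbb{A}_\infty\cup\{\omega\}$. Intersection types over $\mathbb A$: $\sigma::= a\mid\sigma\to\sigma\mid\sigma\cap\sigma$ ($a\in\mathbb A$). An intersection type theory $\mathcal T$ over $\mathbb A$ is a set of inequalities $\sigma\le\tau$ (written $\sigma\le_{\mathcal T}\tau$) closed under (refl) $\sigma\le\sigma$; (incl) $\sigma\cap\tau\le\sigma$ and $\sigma\cap\tau\le\tau$; (glb) $\rho\le\sigma$ and $\rho\le\tau$ imply $\rho\le\sigma\cap\tau$; (trans) $\sigma\le\tau$ and $\tau\le\rho$ imply $\sigma\le\rho$. Additional axioms/rules: $(\omega_{top})$ $\sigma\le\omega$; $(\omega_{\to})$ $\omega\le\sigma\to\omega$; $(\to\cap)$ $(\sigma\to\tau)\cap(\sigma\to\rho)\le\sigma\to(\tau\cap\rho)$; $(\to)$ $\sigma_2\le\sigma_1$ and $\tau_1\le\tau_2$ imply $\sigma_1\to\tau_1\le\sigma_2\to\tau_2$. $\mathcal T_{CDV}$ = smallest type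 theory over $\mathbb A_\infty$ closed under $(\to)$ and $(\to\cap)$; $\mathcal T_{BCD}$ = smallest over $\mathbb A^\omega_\infty$ closed under $(\to),(\to\cap),(\omega_{top}),(\omega_\to)$. $\Delta$-terms: $\Delta::=u_\Delta\mid x\mid\lambda x{:}\sigma.\Delta\mid\Delta\,\Delta\mid\langle\Delta,\Delta\rangle\mid pr_1\Delta\mid pr_2\Delta\mid\Delta^\sigma$, where for every (not necessarily typable) $\Delta$-term $\Delta$ there is a constant $u_\Delta$. The essence $\|\Delta\|$ is the pure $\lambda$-term defined by $\|x\|=x$, $\|u_\Delta\|=\|\Delta\|$, $\|\Delta^\sigma\|=\|\Delta\|$, $\|\lambda x{:}\sigma.\Delta\|=\lambda x.\|\Delta\|$, $\|\Delta_1\Delta_2\|=\|\Delta_1\|\,\|\Delta_2\|$, $\|\langle\Delta_1,\Delta_2\rangle\|=\|\Delta_1\|$, $\|pr_i\Delta\|=\|\Delta\|$. A basis $B$ is a finite set of declarations $x{:}\sigma$ with distinct variables. The typed system $\Delta^{\mathcal T}_{=_{\beta\eta}}$ derives $B\vdash^{\mathcal T}_{=_{\beta\eta}}\Delta:\sigma$ by: (top) $B\vdash u_\Delta:\omega$ if $\omega\in\mathbb A$; (ax) $B\vdash x:\sigma$ if $x{:}\sigma\in B$; ($\to$I) from $B,x{:}\sigma\vdash\Delta:\tau$ infer $B\vdash\lambda x{:}\sigma.\Delta:\sigma\to\tau$; ($\to$E) from $B\vdash\Delta_1:\sigma\to\tau$ and $B\vdash\Delta_2:\sigma$ infer $B\vdash\Delta_1\Delta_2:\tau$;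 ($\cap$I) from $B\vdash\Delta_1:\sigma$, $B\vdash\Delta_2:\tau$ and $\|\Delta_1\|=_{\beta\eta}\|\Delta_2\|$ infer $B\vdash\langle\Delta_1,\Delta_2\rangle:\sigma\cap\tau$; ($\cap$E$_1$) from $B\vdash\Delta:\sigma\cap\tau$ infer $B\vdash pr_1\Delta:\sigma$; ($\cap$E$_2$) from $B\vdash\Delta:\sigma\cap\tau$ infer $B\vdash pr_2\Delta:\tau$; ($\le_{\mathcal T}$) from $B\vdash\Delta:\sigma$ and $\sigma\le_{\mathcal T}\tau$ infer $B\vdash\Delta^\tau:\tau$. The notion of reduction $(\eta)$ is $\lambda x{:}\sigma.\Delta\,x\to\Delta$ if $x\notin FV(\Delta)$; $\to_\eta$ is its contextual closure, with no reduction performed inside the index $\Delta$ of a constant $u_\Delta$. *)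

From Stdlib Require Import Arith List Relations.
Import ListNotations.
Set Implicit Arguments.

Inductive itype (A : Type) : Type :=
| TAtom : A -> itype A
| TArr  : itype A -> itype A -> itype A
| TInt  : itype A -> itype A -> itype A.
Arguments TAtom {A} _.
Arguments TArr {A} _ _.
Arguments TInt {A} _ _.

(* A_inf = { a_i | i in nat } is modelled by nat;
   A^omega_inf = A_inf U {omega} is modelled by option nat, with None = omega. *)
Definition omegaB : itype (option nat) := TAtom None.

Inductive le_CDV : itype nat -> itype nat -> Prop :=
| CDV_refl  s : le_CDV s s
| CDV_incl1 s t : le_CDV (TInt s t) s
| CDV_incl2 s t : le_CDV (TInt s t) t
| CDV_glb r s t : le_CDV r s -> le_CDV r t -> le_CDV r (TInt s t)
| CDV_trans s t r : le_CDV s t -> le_CDV t r -> le_CDV s r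
| CDV_arrint s t r : le_CDV (TInt (TArr s t) (TArr s r)) (TArr s (TInt t r))
| CDV_arr s1 s2 t1 t2 : le_CDV s2 s1 -> le_CDV t1 t2 -> le_CDV (TArr s1 t1) (TArr s2 t2).

Inductive le_BCD : itype (option nat) -> itype (option nat) -> Prop :=
| BCD_refl  s : le_BCD s s
| BCD_incl1 s t : le_BCD (TInt s t) s
| BCD_incl2 s t : le_BCD (TInt s t) t
| BCD_glb r s t : le_BCD r s -> le_BCD r t -> le_BCD r (TInt s t)
| BCD_trans s t r : le_BCD s t -> le_BCD t r -> le_BCD s r
| BCD_arrint s t r : le_BCD (TInt (TArr s t) (TArr s r)) (TArr s (TInt t r))
| BCD_arr s1 s2 t1 t2 : le_BCD s2 s1 -> le_BCD t1 t2 -> le_BCD (TArr s1 t1) (TArr s2 t2)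
| BCD_omtop s : le_BCD s omegaB
| BCD_omarr s : le_BCD omegaB (TArr s omegaB).

Inductive lterm : Type :=
| LVar : nat -> lterm
| LLam : lterm -> lterm
| LApp : lterm -> lterm -> lterm.

Fixpoint llift (k c : nat) (t : lterm) : lterm :=
  match t with
  | LVar n => if c <=? n then LVar (n + k) else LVar n
  | LLam t => LLam (llift k (S c) t)
  | LApp t u => LApp (llift k c t) (llift k c u)
  end.

(* substitute N for index j, decrementing indices above j *)
Fixpoint lsubst (j : nat) (N : lterm) (t : lterm) : lterm :=
  match t with
  | LVar n => if n <? j then LVar n
              else if n =? j then llift j 0 N else LVar (n - 1)
  | LLam t => LLam (lsubst (S j) N t)
  | LApp t u => LApp (lsubst j N t) (lsubst j N u)
  end.

Inductive lbe_step : lterm -> lterm -> Prop :=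
| lbeta M N : lbe_step (LApp (LLam M) N) (lsubst 0 N M)
| leta M : lbe_step (LLam (LApp (llift 1 0 M) (LVar 0))) M
| llam_c M M' : lbe_step M M' -> lbe_step (LLam M) (LLam M')
| lappl_c M M' N : lbe_step M M' -> lbe_step (LApp M N) (LApp M' N)
| lappr_c M N N' : lbe_step N N' -> lbe_step (LApp M N) (LApp M N').

Definition beta_eta_eq : lterm -> lterm -> Prop := clos_refl_sym_trans lterm lbe_step.

Inductive dterm (A : Type) : Type :=
| DConst : dterm A -> dterm A                 (* u_Delta *)
| DVar   : nat -> dterm A
| DLam   : itype A -> dterm A -> dterm A
| DApp   : dterm A -> dterm A -> dterm A
| DPair  : dterm A -> dterm A -> dterm A
| DPr1   : dterm A -> dterm A
| DPr2   : dterm A -> dterm A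
| DCoe   : dterm A -> itype A -> dterm A.
Arguments DConst {A} _.
Arguments DVar {A} _.
Arguments DLam {A} _ _.
Arguments DApp {A} _ _.
Arguments DPair {A} _ _.
Arguments DPr1 {A} _.
Arguments DPr2 {A} _.
Arguments DCoe {A} _ _.

Fixpoint essence {A} (d : dterm A) : lterm :=
  match d with
  | DConst d => essence d
  | DVar x => LVar x
  | DLam _ d => LLam (essence d)
  | DApp d1 d2 => LApp (essence d1) (essence d2)
  | DPair d1 _ => essence d1
  | DPr1 d => essence d
  | DPr2 d => essence d
  | DCoe d _ => essence d
  end.

(* shifting of Delta-terms; the free variables of u_Delta are those of Delta *)
Fixpoint dlift {A} (k c : nat) (d : dterm A) : dterm A :=
  match d with
  | DConst d => DConst (dlift k c d)
  | DVar n => if c <=? n then DVar (n + k) else DVar n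
  | DLam s d => DLam s (dlift k (S c) d)
  | DApp d1 d2 => DApp (dlift k c d1) (dlift k c d2)
  | DPair d1 d2 => DPair (dlift k c d1) (dlift k c d2)
  | DPr1 d => DPr1 (dlift k c d)
  | DPr2 d => DPr2 (dlift k c d)
  | DCoe d s => DCoe (dlift k c d) s
  end.

(* ---------- The typed system Delta^T_{=beta eta} ----------
   A basis is a finite partial assignment of types to de Bruijn indices:
   index x is declared with type s iff nth_error B x = Some (Some s).
   [om] is [Some w] when the atom w = omega belongs to the atom set,
   [None] when omega is not an atom. *)
Definition basis (A : Type) := list (option (itype A)).

Inductive typing {A : Type} (om : option A) (le : itype A -> itype A -> Prop)
  : basis A -> dterm A -> itype A -> Prop :=
| ty_top B d w : om = Some w -> typing om le B (DConst d) (TAtom w)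
| ty_ax B x s : nth_error B x = Some (Some s) -> typing om le B (DVar x) s
| ty_arrI B s d t : typing om le (Some s :: B) d t -> typing om le B (DLam s d) (TArr s t)
| ty_arrE B d1 d2 s t : typing om le B d1 (TArr s t) -> typing om le B d2 s ->
    typing om le B (DApp d1 d2) t
| ty_intI B d1 d2 s t : typing om le B d1 s -> typing om le B d2 t ->
    beta_eta_eq (essence d1) (essence d2) ->
    typing om le B (DPair d1 d2) (TInt s t)
| ty_intE1 B d s t : typing om le B d (TInt s t) -> typing om le B (DPr1 d) s
| ty_intE2 B d s t : typing om le B d (TInt s t) -> typing om le B (DPr2 d) t
| ty_le B d s t : typing om le B d s -> le s t -> typing om le B (DCoe d t) t.

(* ---------- eta-reduction on Delta-terms ----------
   (eta)  lambda x:s. Delta x -> Delta  if x not in FV(Delta);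
   in de Bruijn form: DLam s (DApp (dlift 1 0 D) (DVar 0)) -> D.
   Contextual closure, but no reduction inside the index of u_Delta. *)
Inductive eta_step {A : Type} : dterm A -> dterm A -> Prop :=
| eta_root s d : eta_step (DLam s (DApp (dlift 1 0 d) (DVar 0))) d
| eta_lam s d d' : eta_step d d' -> eta_step (DLam s d) (DLam s d')
| eta_appl d1 d1' d2 : eta_step d1 d1' -> eta_step (DApp d1 d2) (DApp d1' d2)
| eta_appr d1 d2 d2' : eta_step d2 d2' -> eta_step (DApp d1 d2) (DApp d1 d2')
| eta_pairl d1 d1' d2 : eta_step d1 d1' -> eta_step (DPair d1 d2) (DPair d1' d2)
| eta_pairr d1 d2 d2' : eta_step d2 d2' -> eta_step (DPair d1 d2) (DPair d1 d2')
| eta_pr1 d d' : eta_step d d' -> eta_step (DPr1 d) (DPr1 d')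
| eta_pr2 d d' : eta_step d d' -> eta_step (DPr2 d) (DPr2 d')
| eta_coe d d' s : eta_step d d' -> eta_step (DCoe d s) (DCoe d' s).

Definition typing_CDV := @typing nat None le_CDV.
Definition typing_BCD := @typing (option nat) (Some None) le_BCD.

(* Because subsumption is an explicit coercion term, an η-redex λx:σ. Δ x can only
   have an arrow type σ → τ by typing Δ x with x : σ exactly, i.e. Δ : σ → τ in the
   extended basis; as x does not occur in Δ, the declaration x : σ can be dropped.
   Every other case is congruence, except that (∩I) requires the essences of the two
   components to stay βη-equal, which holds since an η-step on Δ-terms changes the
   essence by at most one η-step.  Strengthening the basis in turn needs =βη to be
   reflected by shifting, which follows from its stability under renaming.  No
   property of the type theory is used, so the result holds for any ≤. *)

From Stdlib Require Import Arith List Relations Lia.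
Set Implicit Arguments.

Definition up (f : nat -> nat) (n : nat) : nat :=
  match n with 0 => 0 | S m => S (f m) end.

Fixpoint ren (f : nat -> nat) (t : lterm) : lterm :=
  match t with
  | LVar n => LVar (f n)
  | LLam t => LLam (ren (up f) t)
  | LApp t u => LApp (ren f t) (ren f u)
  end.

Lemma ren_ext t : forall f g, (forall n, f n = g n) -> ren f t = ren g t.
Proof.
  induction t; intros f g H; simpl; f_equal; auto.
  apply IHt; intros [|n]; simpl; auto.
Qed.

Lemma ren_comp t : forall f g, ren f (ren g t) = ren (fun n => f (g n)) t.
Proof.
  induction t; intros f g; simpl; f_equal; auto.
  rewrite IHt; apply ren_ext; intros [|n]; auto.
Qed.

Lemma ren_id t : forall f, (forall n, f n = n) -> ren f t = t.
Proof.
  induction t; intros f H; simpl; f_equal; auto.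
  apply IHt; intros [|n]; simpl; auto.
Qed.

Definition liftf (k c n : nat) : nat := if c <=? n then n + k else n.

Lemma llift_ren t : forall k c, llift k c t = ren (liftf k c) t.
Proof.
  induction t as [n| t IHt | t IHt u IHu]; intros k c; simpl.
  - unfold liftf; destruct (c <=? n); auto.
  - f_equal; rewrite IHt; apply ren_ext; intros [|n]; unfold liftf; simpl; auto.
    destruct (c <=? n); auto.
  - f_equal; auto.
Qed.

Fixpoint upn (j : nat) (f : nat -> nat) : nat -> nat :=
  match j with 0 => f | S j => up (upn j f) end.

Lemma upn_spec j : forall f n, upn j f n = if n <? j then n else f (n - j) + j.
Proof.
  induction j; intros f n; simpl.
  - now rewrite Nat.sub_0_r, Nat.add_0_r.
  - destruct n as [|n]; simpl; auto.
    rewrite IHj; change (S n <? S j) with (n <? j).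
    destruct (n <? j); lia.
Qed.

Lemma ren_lsubst M : forall j f N,
  ren (upn j f) (lsubst j N M) = lsubst j (ren f N) (ren (upn (S j) f) M).
Proof.
  induction M as [n| M IHM | M IHM M' IHM']; intros j f N.
  - cbn [ren lsubst]; rewrite (upn_spec (S j)).
    destruct (lt_eq_lt_dec n j) as [[Hlt|<-]|Hgt].
    + replace (n <? j) with true by (symmetry; apply Nat.ltb_lt; lia).
      replace (n <? S j) with true by (symmetry; apply Nat.ltb_lt; lia).
      cbn [ren lsubst]; rewrite upn_spec.
      now replace (n <? j) with true by (symmetry; apply Nat.ltb_lt; lia).
    + rewrite Nat.ltb_irrefl, Nat.eqb_refl.
      replace (n <? S n) with true by (symmetry; apply Nat.ltb_lt; lia).
      cbn [ren lsubst]; rewrite Nat.ltb_irrefl, Nat.eqb_refl.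
      rewrite !llift_ren, !ren_comp; apply ren_ext; intros m.
      rewrite upn_spec; unfold liftf; simpl.
      replace (m + n <? n) with false by (symmetry; apply Nat.ltb_ge; lia).
      now replace (m + n - n) with m by lia.
    + replace (n <? j) with false by (symmetry; apply Nat.ltb_ge; lia).
      replace (n =? j) with false by (symmetry; apply Nat.eqb_neq; lia).
      replace (n <? S j) with false by (symmetry; apply Nat.ltb_ge; lia).
      cbn [ren lsubst].
      replace (f (n - S j) + S j <? j) with false by (symmetry; apply Nat.ltb_ge; lia).
      replace (f (n - S j) + S j =? j) with false by (symmetry; apply Nat.eqb_neq; lia).
      rewrite upn_spec.
      replace (n - 1 <? j) with false by (symmetry; apply Nat.ltb_ge; lia).
      f_equal; replace (n - 1 - j) with (n - S j) by lia; lia.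
  - simpl; f_equal; apply (IHM (S j)).
  - simpl; f_equal; auto.
Qed.

Lemma lbe_step_ren M M' : lbe_step M M' -> forall f, lbe_step (ren f M) (ren f M').
Proof.
  induction 1; intros f; simpl.
  - change (ren f (lsubst 0 N M)) with (ren (upn 0 f) (lsubst 0 N M)).
    rewrite ren_lsubst; apply lbeta.
  - replace (ren (up f) (llift 1 0 M)) with (llift 1 0 (ren f M)); [apply leta|].
    rewrite !llift_ren, !ren_comp; apply ren_ext; intros n.
    unfold liftf; simpl; now rewrite !Nat.add_1_r.
  - now apply llam_c.
  - now apply lappl_c.
  - now apply lappr_c.
Qed.

Lemma beta_eta_eq_ren M N : beta_eta_eq M N -> forall f, beta_eta_eq (ren f M) (ren f N).
Proof.
  induction 1; intros f.
  - now apply rst_step, lbe_step_ren.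
  - apply rst_refl.
  - apply rst_sym, IHclos_refl_sym_trans.
  - eapply rst_trans; [apply IHclos_refl_sym_trans1 | apply IHclos_refl_sym_trans2].
Qed.

Definition lowerf (c n : nat) : nat := if n <=? c then n else n - 1.

Lemma ren_lowerf_llift M c : ren (lowerf c) (llift 1 c M) = M.
Proof.
  rewrite llift_ren, ren_comp; apply ren_id; intros n.
  unfold lowerf, liftf.
  destruct (Nat.leb_spec c n); destruct (Nat.leb_spec (n + 1) c);
    destruct (Nat.leb_spec n c); lia.
Qed.

Lemma beta_eta_eq_llift_inv M N c :
  beta_eta_eq (llift 1 c M) (llift 1 c N) -> beta_eta_eq M N.
Proof.
  intros H; rewrite <- (ren_lowerf_llift M c), <- (ren_lowerf_llift N c).
  now apply beta_eta_eq_ren.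
Qed.

Lemma essence_dlift A (d : dterm A) : forall k c,
  essence (dlift k c d) = llift k c (essence d).
Proof.
  induction d; intros k c; simpl; try rewrite IHd; try rewrite IHd1, IHd2; auto.
  destruct (c <=? n); auto.
Qed.

Section Typing.

Variables (A : Type) (om : option A) (le : itype A -> itype A -> Prop).

Lemma typing_dlift_inv (B' : basis A) e t : typing om le B' e t ->
  forall d c B, e = dlift 1 c d ->
  (forall n, nth_error B n = nth_error B' (liftf 1 c n)) ->
  typing om le B d t.
Proof.
  induction 1; intros d0 c B0 He HB; destruct d0; simpl in He; try discriminate;
    try (destruct (c <=? n); discriminate); try (injection He; intros; subst).
  - now apply ty_top.
  - apply ty_ax; rewrite HB; unfold liftf.
    destruct (c <=? n); injection He; intros; subst; auto.
  - apply ty_arrI; eapply IHtyping; eauto.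
    intros [|n]; simpl; auto; rewrite HB; unfold liftf; simpl.
    destruct (c <=? n); auto.
  - eapply ty_arrE; eauto.
  - apply ty_intI; eauto.
    rewrite !essence_dlift in H1; eapply beta_eta_eq_llift_inv; eauto.
  - eapply ty_intE1; eauto.
  - eapply ty_intE2; eauto.
  - eapply ty_le; eauto.
Qed.

Lemma eta_step_essence (d d' : dterm A) : eta_step d d' ->
  essence d = essence d' \/ lbe_step (essence d) (essence d').
Proof.
  induction 1; simpl; auto.
  - right; rewrite essence_dlift; apply leta.
  - destruct IHeta_step; [left; f_equal | right; apply llam_c]; auto.
  - destruct IHeta_step; [left; f_equal | right; apply lappl_c]; auto.
  - destruct IHeta_step; [left; f_equal | right; apply lappr_c]; auto.
Qed.

Lemma eta_step_beta_eta_eq (d d' : dterm A) :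
  eta_step d d' -> beta_eta_eq (essence d) (essence d').
Proof.
  intros H; destruct (eta_step_essence H) as [E|S].
  - rewrite E; apply rst_refl.
  - now apply rst_step.
Qed.

Lemma typing_eta_redex B s d t :
  typing om le B (DLam s (DApp (dlift 1 0 d) (DVar 0))) t -> typing om le B d t.
Proof.
  intros H; inversion H as [| |? ? ? t' Hbody| | | | |]; subst.
  inversion Hbody as [| | |? ? ? s' ? Hfun Hx| | | |]; subst.
  inversion Hx as [|? ? ? Hnth| | | | | |]; subst.
  simpl in Hnth; injection Hnth as <-.
  apply (typing_dlift_inv Hfun d 0 B eq_refl).
  intros n; unfold liftf; simpl; now rewrite Nat.add_1_r.
Qed.

Lemma typing_eta_step B d1 t : typing om le B d1 t ->
  forall d2, eta_step d1 d2 -> typing om le B d2 t.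
Proof.
  induction 1; intros d' Hs; inversion Hs; subst.
  - eapply typing_eta_redex, ty_arrI; eassumption.
  - now apply ty_arrI, IHtyping.
  - eapply ty_arrE; eauto.
  - eapply ty_arrE; eauto.
  - apply ty_intI; auto.
    eapply rst_trans; [apply rst_sym, eta_step_beta_eta_eq|]; eauto.
  - apply ty_intI; auto.
    eapply rst_trans; [|apply eta_step_beta_eta_eq]; eauto.
  - eapply ty_intE1; eauto.
  - eapply ty_intE2; eauto.
  - eapply ty_le; eauto.
Qed.

End Typing.

Theorem mainTheorem11 :
  (forall (B : basis nat) (d1 d2 : dterm nat) (s : itype nat),
      typing_CDV B d1 s -> eta_step d1 d2 -> typing_CDV B d2 s) /\
  (forall (B : basis (option nat)) (d1 d2 : dterm (option nat)) (s : itype (option nat)),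
      typing_BCD B d1 s -> eta_step d1 d2 -> typing_BCD B d2 s).
Proof.
  split; intros; eapply typing_eta_step; eauto.
Qed.
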